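(* In the setting of the context, let $j\ge1$ and $d\ge1$ be integers. Assume there exists $m\ge1$ with $2^{m-1}>j$ and $d\in\mathcal E_m$. Then there exist integers $\alpha,\beta$ with $\alpha-\beta=d$, $P_j(\{\alpha\})>0$ and $P_j(\{\beta\})>0$.
   Context: Let $\pi_m\ge2$ ($m\ge1$) be integers and $\eta_{m,i}\ge0$ ($m\ge1$, $0\le i\le\pi_m-1$) integers; write $\eta_m:i\mapsto\eta_{m,i}$. $\overline Y=\prod_{m\ge1}\{0,\dots,\pi_m-1\}$ with product uniform measure $\overline\nu$ and odometer $\overline S$ (add $1$ to the first coordinate with carry to the right). $\gamma(\overline y)=\sum_{m=1}^{\overline t(\overline y)}\eta_{m,\overline y_m}$ where $\overline t(\overline y)$ is the smallest $t\ge1$ with $\overline y_t<\pi_t-1$. $P_j$ is the distribution under $\overline\nu$ of $\gamma+\gamma\circ\overline S+\dots+\gamma\circ\overline S^{j-1}$. $\mathcal S_m=\eta_m(\{0,\dots,\pi_m-2\})\cup\big(\eta_{m,\pi_m-1}+\eta_{m+1}(\{0,\dots,\pi_{m+1}-2\})\big)$, $\mathcal E_m=\mathcal S_m-\mathcal S_m$. *)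

From Stdlib Require Import Reals ZArith.
From mathcomp Require Import all_boot.
Set Implicit Arguments. Unset Strict Implicit. Unset Printing Implicit Defensive.

(* Points of Ybar are sequences (y_1, y_2, ...); a cylinder is given by a
   finite prefix w = [:: y_m; y_{m+1}; ...] whose head has coordinate index m. *)

(* Odometer on a prefix starting at coordinate m: None if the carry leaves the
   prefix (then Sbar y is not determined by the prefix). *)
Fixpoint odo (pi : nat -> nat) (m : nat) (w : seq nat) : option (seq nat) :=
  match w with
  | [::] => None
  | y :: w' => if y.+1 < pi m then Some (y.+1 :: w')
               else omap (cons 0) (odo pi m.+1 w')
  end.

(* gamma on a prefix starting at coordinate m:
   sum_{k=m}^{t} eta_{k, y_k}, t the first index with y_t < pi_t - 1;
   None if no such t inside the prefix. *)
Fixpoint gam (pi : nat -> nat) (eta : nat -> nat -> nat) (m : nat) (w : seq nat)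
  : option nat :=
  match w with
  | [::] => None
  | y :: w' => if y.+1 < pi m then Some (eta m y)
               else omap (addn (eta m y)) (gam pi eta m.+1 w')
  end.

(* gamma + gamma o S + ... + gamma o S^(j-1) on a prefix (starting at coordinate 1),
   None if not determined by the prefix. *)
Fixpoint bsum (pi : nat -> nat) (eta : nat -> nat -> nat) (j : nat) (w : seq nat)
  : option nat :=
  match j with
  | 0 => Some 0
  | j'.+1 =>
    match gam pi eta 1 w with
    | None => None
    | Some g =>
      match j' with
      | 0 => Some g
      | _ => match odo pi 1 w with
             | None => None
             | Some w2 => omap (addn g) (bsum pi eta j' w2)
             end
      end
    end
  end.

Fixpoint prefixes (pi : nat -> nat) (m n : nat) : seq (seq nat) :=
  match n with
  | 0 => [:: [::]]
  | n'.+1 => flatten [seq [seq y :: w | w <- prefixes pi m.+1 n'] | y <- iota 0 (pi m)]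
  end.

Definition good_count (pi : nat -> nat) (eta : nat -> nat -> nat) (j : nat)
  (alpha : Z) (n : nat) : nat :=
  count (fun w => if bsum pi eta j w is Some s then Z.eqb (Z.of_nat s) alpha else false)
        (prefixes pi 1 n).

Lemma size_prefixes pi m n : size (prefixes pi m n) = \prod_(m <= k < m + n) pi k.
Proof.
elim: n m => [|n IH] m /=; first by rewrite addn0 big_geq.
rewrite size_flatten /shape -map_comp.
rewrite (eq_map (g := fun _ => \prod_(m.+1 <= k < m.+1 + n) pi k)); last first.
  by move=> y /=; rewrite size_map IH.
have mc (c : nat) (s : seq nat) : map (fun _ => c) s = nseq (size s) c.
  by elim: s => //= a s ->.
rewrite mc sumn_nseq size_iota mulnC -addSnnS [in RHS]big_ltn //.
by rewrite ltnS leq_addr.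
Qed.

(* Measure (under the uniform product measure) of the union of the length-n
   cylinders on which the sum equals alpha. *)
Definition approx_mass (pi : nat -> nat) (eta : nat -> nat -> nat) (j : nat)
  (alpha : Z) (n : nat) : R :=
  Rdiv (INR (good_count pi eta j alpha n)) (INR (\prod_(1 <= k < n.+1) pi k)).

Definition approx_set pi eta j alpha : R -> Prop :=
  fun r => exists n, r = approx_mass pi eta j alpha n.

Lemma approx_set_bound pi eta j alpha : bound (approx_set pi eta j alpha).
Proof.
exists R1 => r [n ->]; rewrite /approx_mass.
have Hc : (good_count pi eta j alpha n <= \prod_(1 <= k < n.+1) pi k)%N.
  by apply: leq_trans (count_size _ _) _; rewrite size_prefixes add1n.
case: (eqVneq (\prod_(1 <= k < n.+1) pi k) 0%N) => Hp.
  by rewrite Hp /= Rdiv_def Rinv_0 Rmult_0_r; apply: Rle_0_1.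
apply: (Rmult_le_reg_r (INR (\prod_(1 <= k < n.+1) pi k))).
  by apply: lt_0_INR; apply/ltP; rewrite lt0n.
rewrite Rmult_1_l Rdiv_def Rmult_assoc Rinv_l ?Rmult_1_r.
  by apply: le_INR; apply/leP.
by apply: not_0_INR; apply/eqP.
Qed.

Lemma approx_set_ne pi eta j alpha : exists x, approx_set pi eta j alpha x.
Proof. by exists (approx_mass pi eta j alpha 0); exists 0%N. Qed.

(* P_j({alpha}): the event {gamma + ... + gamma o S^(j-1) = alpha} is, up to a
   null set, the increasing union over n of the unions of length-n cylinders on
   which the sum is determined and equals alpha; its measure is the supremum. *)
Definition Pj (pi : nat -> nat) (eta : nat -> nat -> nat) (j : nat) (alpha : Z) : R :=
  proj1_sig (completeness _ (approx_set_bound pi eta j alpha) (approx_set_ne pi eta j alpha)).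

Definition in_Sm (pi : nat -> nat) (eta : nat -> nat -> nat) (m : nat) (x : Z) : Prop :=
  (exists i, (i.+1 < pi m)%N /\ x = Z.of_nat (eta m i)) \/
  (exists i, (i.+1 < pi m.+1)%N /\
             x = Z.of_nat (eta m (pi m).-1 + eta m.+1 i)).

Definition in_Em (pi : nat -> nat) (eta : nat -> nat -> nat) (m : nat) (x : Z) : Prop :=
  exists s1 s2, in_Sm pi eta m s1 /\ in_Sm pi eta m s2 /\ x = (s1 - s2)%Z.

From Stdlib Require Import Reals ZArith Lia.
From mathcomp Require Import all_boot zify.

Set Implicit Arguments.
Unset Strict Implicit.

(* Take the cylinder on which y_k = pi_k - 1 for 1 <= k < m.  There gamma is
   c + s, with c = sum_{k<m} eta_{k,pi_k-1} and s an element of S_m selected by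
   the digits y_m, y_{m+1}; every element of S_m is obtained this way.  The
   odometer then clears the first m-1 digits, and since j - 1 < 2^(m-1) <=
   pi_1 ... pi_(m-1), the following j - 1 iterates move only these digits, so
   gamma o S + ... + gamma o S^(j-1) is a constant g independent of s.  Thus for
   each s in S_m the value c + s + g is taken on a cylinder, which has positive
   measure; two elements of S_m at distance d give alpha and beta. *)

Section Cylinders.

Variables (pi : nat -> nat) (eta : nat -> nat -> nat).

Fixpoint admissible a (w : seq nat) : bool :=
  if w is y :: w' then (y < pi a) && admissible a.+1 w' else true.

(* The little-endian mixed-radix value of a prefix: the odometer adds one to it. *)
Fixpoint radix_value a (w : seq nat) : nat :=
  if w is y :: w' then y + pi a * radix_value a.+1 w' else 0.

Definition top_digits a L : seq nat := [seq (pi k).-1 | k <- iota a L].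

Lemma admissible_cat a u v :
  admissible a (u ++ v) = admissible a u && admissible (a + size u) v.
Proof. by elim: u a => [|y u IH] a /=; rewrite ?addn0 // IH addSnnS andbA. Qed.

Lemma admissible_top_digits a L :
  (forall k, a <= k -> 0 < pi k) -> admissible a (top_digits a L).
Proof.
elim: L a => //= L IH a pi_gt0.
by rewrite ltn_predL pi_gt0 // IH // => k /ltnW; apply: pi_gt0.
Qed.

Lemma admissible_nseq0 a L :
  (forall k, a <= k -> 0 < pi k) -> admissible a (nseq L 0).
Proof.
elim: L a => //= L IH a pi_gt0.
by rewrite pi_gt0 // IH // => k /ltnW; apply: pi_gt0.
Qed.

Lemma radix_value_nseq0 a L : radix_value a (nseq L 0) = 0.
Proof. by elim: L a => //= L IH a; rewrite IH muln0. Qed.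

Lemma expn2_leq_prod a L :
  (forall k, a <= k -> 2 <= pi k) -> 2 ^ L <= \prod_(a <= k < a + L) pi k.
Proof.
move=> pi_ge2; elim: L => [|L IH]; first by rewrite addn0 big_geq.
by rewrite addnS big_nat_recr ?leq_addr //= expnS mulnC leq_mul // pi_ge2 ?leq_addr.
Qed.

Lemma odo_radix_value a w w' : admissible a w -> odo pi a w = Some w' ->
  [/\ admissible a w', radix_value a w' = (radix_value a w).+1 & size w' = size w].
Proof.
elim: w a w' => [|y w IH] a w' //= /andP[y_lt w_adm].
case: ifP => [y1_lt [<-] | y1_ge] /=; first by rewrite y1_lt w_adm.
case odo_w: (odo pi a.+1 w) => [w2|] //= [<-].
have [w2_adm w2_value w2_size] := IH _ _ w_adm odo_w.
have y1_eq : y.+1 = pi a by apply/eqP; rewrite eqn_leq y_lt leqNgt y1_ge.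
rewrite /= w2_adm w2_value w2_size (leq_ltn_trans (leq0n y) y_lt) -y1_eq.
by split => //; lia.
Qed.

(* The odometer leaves a prefix exactly when all its digits are maximal. *)
Lemma odo_None_radix_value a w : admissible a w -> odo pi a w = None ->
  (radix_value a w).+1 = \prod_(a <= k < a + size w) pi k.
Proof.
elim: w a => [|y w IH] a /=; first by rewrite addn0 big_geq.
move=> /andP[y_lt w_adm]; case: ifP => // y1_ge.
case odo_w: (odo pi a.+1 w) => //= _.
rewrite -addSnnS big_ltn ?ltnS ?leq_addr // -(IH _ w_adm odo_w).
have y1_eq : y.+1 = pi a by apply/eqP; rewrite eqn_leq y_lt leqNgt y1_ge.
by rewrite -y1_eq; lia.
Qed.

Lemma isSome_gam a w : isSome (gam pi eta a w) = isSome (odo pi a w).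
Proof.
elim: w a => [|y w IH] a //=; case: ifP => // _.
by have := IH a.+1; case: gam; case: odo.
Qed.

Lemma gam_cat a u v g : gam pi eta a u = Some g -> gam pi eta a (u ++ v) = Some g.
Proof.
elim: u a g => [|y u IH] a g //=; case: ifP => // _.
by case gam_u: (gam _ _ _ u) => [g'|] //= [<-]; rewrite (IH _ _ gam_u).
Qed.

Lemma odo_cat a u v u' : odo pi a u = Some u' -> odo pi a (u ++ v) = Some (u' ++ v).
Proof.
elim: u a u' => [|y u IH] a u' //=; case: ifP => [_ [<-] // | _].
by case odo_u: (odo _ _ u) => [u2|] //= [<-]; rewrite (IH _ _ odo_u).
Qed.

Lemma gam_top_digits a L v :
  gam pi eta a (top_digits a L ++ v) =
  omap (addn (\sum_(a <= k < a + L) eta k (pi k).-1)) (gam pi eta (a + L) v).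
Proof.
elim: L a => [|L IH] a /=; first by rewrite addn0 big_geq //; case: gam.
rewrite ltnNge leqSpred /= IH addSnnS [in RHS]big_ltn ?addnS ?ltnS ?leq_addr //.
by case: gam => //= s; rewrite addnA.
Qed.

Lemma odo_top_digits a L v :
  odo pi a (top_digits a L ++ v) = omap (cat (nseq L 0)) (odo pi (a + L) v).
Proof.
elim: L a => [|L IH] a /=; first by rewrite addn0; case: odo.
by rewrite ltnNge leqSpred IH addSnnS; case: odo.
Qed.

Lemma bsumS j w g w' : gam pi eta 1 w = Some g -> odo pi 1 w = Some w' ->
  bsum pi eta j.+1 w = omap (addn g) (bsum pi eta j w').
Proof. by move=> /= -> ->; case: j => [|j] //=; rewrite addn0. Qed.

(* As long as the odometer does not carry out of u, the sum is read off u. *)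
Lemma bsum_prefix_determined k u : admissible 1 u ->
  radix_value 1 u + k < \prod_(1 <= i < 1 + size u) pi i ->
  exists s, forall v, bsum pi eta k (u ++ v) = Some s.
Proof.
elim: k u => [|k IH] u u_adm u_bound; first by exists 0.
have [u' odo_u] : exists u', odo pi 1 u = Some u'.
  case odo_u: (odo pi 1 u) => [u'|]; first by exists u'.
  by move: u_bound; rewrite -(odo_None_radix_value u_adm odo_u); lia.
have [g gam_u] : exists g, gam pi eta 1 u = Some g.
  by move: (isSome_gam 1 u); rewrite odo_u; case: gam => // g _; exists g.
have [u'_adm u'_value u'_size] := odo_radix_value u_adm odo_u.
have [s bsum_u'] : exists s, forall v, bsum pi eta k (u' ++ v) = Some s.
  by apply: IH => //; rewrite u'_value u'_size; lia.
by exists (g + s) => v; rewrite (bsumS k (gam_cat v gam_u) (odo_cat v odo_u)) bsum_u'.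
Qed.

Lemma bsum_top_digits L j g v s v' :
  (forall v0, bsum pi eta j (nseq L 0 ++ v0) = Some g) ->
  gam pi eta L.+1 v = Some s -> odo pi L.+1 v = Some v' ->
  bsum pi eta j.+1 (top_digits 1 L ++ v) =
  Some (\sum_(1 <= k < 1 + L) eta k (pi k).-1 + s + g).
Proof.
move=> bsum_zeros gam_v odo_v.
have gam_top : gam pi eta 1 (top_digits 1 L ++ v) =
               Some (\sum_(1 <= k < 1 + L) eta k (pi k).-1 + s).
  by rewrite gam_top_digits add1n gam_v.
have odo_top : odo pi 1 (top_digits 1 L ++ v) = Some (nseq L 0 ++ v').
  by rewrite odo_top_digits add1n odo_v.
by rewrite (bsumS j gam_top odo_top) bsum_zeros.
Qed.

Lemma mem_prefixes a w : admissible a w -> w \in prefixes pi a (size w).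
Proof.
elim: w a => [|y w IH] a /=; first by rewrite inE.
move=> /andP[y_lt w_adm]; apply/flattenP.
exists [seq y :: w0 | w0 <- prefixes pi a.+1 (size w)].
  by apply/mapP; exists y; rewrite ?mem_iota.
exact/map_f/IH.
Qed.

Lemma Pj_gt0 j w s : admissible 1 w -> bsum pi eta j w = Some s ->
  Rlt R0 (Pj pi eta j (Z.of_nat s)).
Proof.
move=> w_adm bsum_w.
have count_gt0 : 0 < good_count pi eta j (Z.of_nat s) (size w).
  rewrite /good_count -has_count; apply/hasP; exists w; first exact: mem_prefixes.
  by rewrite bsum_w Z.eqb_refl.
have prod_gt0 : 0 < \prod_(1 <= k < (size w).+1) pi k.
  by rewrite -add1n -size_prefixes (leq_trans count_gt0) ?count_size.
rewrite /Pj; case: completeness => l [l_ub _] /=.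
apply: Rlt_le_trans (l_ub _ (ex_intro _ (size w) erefl)).
by apply: Rdiv_lt_0_compat; apply/lt_0_INR/ltP.
Qed.

Lemma in_Sm_cylinder m x : 0 < pi m -> in_Sm pi eta m x ->
  exists v s v', [/\ admissible m v, gam pi eta m v = Some s,
                     odo pi m v = Some v' & x = Z.of_nat s].
Proof.
move=> pi_gt0 [[i [i_lt ->]] | [i [i_lt ->]]].
- exists [:: i], (eta m i), [:: i.+1].
  by rewrite /= i_lt andbT (ltnW i_lt).
- exists [:: (pi m).-1; i], (eta m (pi m).-1 + eta m.+1 i), [:: 0; i.+1].
  by rewrite /= [(pi m).-1.+1 < _]ltnNge leqSpred i_lt ltn_predL pi_gt0 (ltnW i_lt).
Qed.

End Cylinders.

Theorem mainTheorem16 (pi : nat -> nat) (eta : nat -> nat -> nat)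
  (Hpi : forall m : nat, (1 <= m)%N -> (2 <= pi m)%N)
  (j : nat) (d : Z) (Hj : (1 <= j)%N) (Hd : (1 <= d)%Z)
  (Hm : exists m : nat, (1 <= m)%N /\ (j < 2 ^ (m - 1))%N /\ in_Em pi eta m d) :
  exists alpha beta : Z, (alpha - beta)%Z = d /\
    Rlt R0 (Pj pi eta j alpha) /\ Rlt R0 (Pj pi eta j beta).
Proof.
case: Hm => m [m_ge1 [j_lt [x1 [x2 [Sm_x1 [Sm_x2 ->]]]]]].
case: m m_ge1 j_lt Sm_x1 Sm_x2 => [|L] // _; rewrite subn1 /= => j_lt Sm_x1 Sm_x2.
case: j Hj j_lt => [|j] // _ j_lt.
have pi_gt0 k : 1 <= k -> 0 < pi k by move/Hpi/ltnW.
have [g bsum_zeros] : exists g, forall v, bsum pi eta j (nseq L 0 ++ v) = Some g.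
  apply: bsum_prefix_determined; first exact: admissible_nseq0.
  by rewrite radix_value_nseq0 size_nseq; have := expn2_leq_prod L Hpi; lia.
have [v1 [s1 [v1' [v1_adm gam_v1 odo_v1 ->]]]] := in_Sm_cylinder (pi_gt0 L.+1 isT) Sm_x1.
have [v2 [s2 [v2' [v2_adm gam_v2 odo_v2 ->]]]] := in_Sm_cylinder (pi_gt0 L.+1 isT) Sm_x2.
have top_adm v : admissible pi L.+1 v -> admissible pi 1 (top_digits pi 1 L ++ v).
  by rewrite admissible_cat admissible_top_digits // size_map size_iota add1n.
set c := \sum_(1 <= k < 1 + L) eta k (pi k).-1.
exists (Z.of_nat (c + s1 + g)), (Z.of_nat (c + s2 + g)); split; first lia.
split.
- exact: Pj_gt0 (top_adm _ v1_adm) (bsum_top_digits bsum_zeros gam_v1 odo_v1).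
- exact: Pj_gt0 (top_adm _ v2_adm) (bsum_top_digits bsum_zeros gam_v2 odo_v2).
Qed.
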